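(* An oval in $\mathbb{R}^{2}$ is an ellipse centered at the origin if and only if its support function $h$ satisfies $(h^{2})'''+4(h^{2})'=0$.
   Context: Identify $\mathbb{R}^{2}\cong\mathbb{C}$. An oval is a $C^{2}$ embedded closed plane curve with nowhere-vanishing curvature. The support function of an oval $\mathcal{O}$ is $h(\theta)=\sup_{p\in\mathcal{O}}p\cdot e^{i\theta}$, regarded as a $2\pi$-periodic function of $\theta\in\mathbb{R}$. *)

From Stdlib Require Import Reals.
From Coquelicot Require Import Coquelicot.
Open Scope R_scope.

Definition C2 (f : R -> R) : Prop :=
  forall t, ex_derive f t /\ ex_derive (Derive f) t /\
            continuous (Derive (Derive f)) t.

(* (x,y) is a C^2 parametrization of an oval with period L > 0:
   C^2, L-periodic (closed), injective on one period (embedded),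
   regular, and with nowhere-vanishing curvature
   kappa = (x'y'' - y'x'') / |gamma'|^3. *)
Definition is_oval_param (x y : R -> R) (L : R) : Prop :=
  0 < L /\ C2 x /\ C2 y /\
  (forall t, x (t + L) = x t /\ y (t + L) = y t) /\
  (forall s t, 0 <= s < L -> 0 <= t < L -> x s = x t -> y s = y t -> s = t) /\
  (forall t, Derive x t <> 0 \/ Derive y t <> 0) /\
  (forall t, (Derive x t * Derive (Derive y) t
              - Derive y t * Derive (Derive x) t)
             / (Rsqr (Derive x t) + Rsqr (Derive y t)) ^ 3 <> 0 ).

Definition curve_image (x y : R -> R) : (R * R) -> Prop :=
  fun p => exists t, p = (x t, y t).

Definition support_fun (O : (R * R) -> Prop) (theta : R) : R :=
  real (Lub_Rbar (fun r => exists p, O p /\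
                     r = fst p * cos theta + snd p * sin theta)).

Definition is_centered_ellipse (O : (R * R) -> Prop) : Prop :=
  exists a b phi, 0 < a /\ 0 < b /\
    forall p, O p <->
      exists s, p = (a * cos s * cos phi - b * sin s * sin phi,
                     a * cos s * sin phi + b * sin s * cos phi).

Definition sq_support_ode (h : R -> R) : Prop :=
  let g := fun theta => (h theta) ^ 2 in
  forall theta,
    ex_derive g theta /\ ex_derive_n g 2 theta /\ ex_derive_n g 3 theta /\
    Derive_n g 3 theta + 4 * Derive g theta = 0.

From Stdlib Require Import Reals Lra Psatz ZArith FunctionalExtensionality ClassicalEpsilon.
From Coquelicot Require Import Coquelicot.
Open Scope R_scope.

(* The support function of the ellipse with semi-axes a, b rotated by phi satisfies
   h(th)^2 = a^2 cos^2(th - phi) + b^2 sin^2(th - phi) = A + B cos 2th + C sin 2th, and these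
   trigonometric polynomials are exactly the solutions of g''' + 4 g' = 0.
   Conversely, such an h^2 can be written p cos^2(th - phi) + q sin^2(th - phi) with p >= q >= 0.
   If q = 0 the curve lies on a line, impossible for a simple closed curve; otherwise h > 0 is the
   support function of the ellipse E with semi-axes sqrt p, sqrt q. The curve then lies inside E
   and passes through every support point of E, so it contains E; and a simple closed curve
   containing the simple closed curve E is E itself. *)

Lemma polar_form (u v : R) :
  exists al, u = sqrt (u * u + v * v) * cos al /\ v = sqrt (u * u + v * v) * sin al.
Proof.
  destruct (Req_dec (u * u + v * v) 0) as [H0|H0].
  { exists 0. rewrite H0, sqrt_0. nra. }
  set (r := sqrt (u * u + v * v)).
  assert (Hr : 0 < r) by (apply sqrt_lt_R0; nra).
  assert (Hr2 : r * r = u * u + v * v) by (apply sqrt_sqrt; nra).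
  set (c := u / r).
  assert (Hc : -1 <= c <= 1).
  { unfold c; split; apply (Rmult_le_reg_r r); try lra;
      unfold Rdiv; rewrite Rmult_assoc, Rinv_l; nra. }
  assert (Hu : u = r * c) by (unfold c; field; lra).
  assert (Hs : sqrt (1 - c²) = Rabs v / r).
  { apply Rsqr_inj.
    - apply sqrt_pos.
    - apply Rmult_le_pos; [apply Rabs_pos | left; apply Rinv_0_lt_compat; lra].
    - rewrite Rsqr_sqrt by (unfold Rsqr; nra).
      assert (Hav : Rabs v * Rabs v = v * v) by (rewrite <- Rabs_mult; apply Rabs_right; nra).
      unfold Rsqr, c.
      replace (Rabs v / r * (Rabs v / r)) with ((Rabs v * Rabs v) / (r * r)) by (field; lra).
      rewrite Hav. replace (v * v) with (r * r - u * u) by lra. field. lra. }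
  destruct (Rle_lt_dec 0 v) as [Hv|Hv].
  - exists (acos c). rewrite cos_acos, sin_acos, Hs, Rabs_right by lra.
    split; [lra | field; lra].
  - exists (- acos c). rewrite cos_neg, sin_neg, cos_acos, sin_acos, Hs, Rabs_left by lra.
    split; [lra | field; lra].
Qed.

Lemma cos_sin_inj (s1 s2 : R) : 0 <= s1 < 2 * PI -> 0 <= s2 < 2 * PI ->
  cos s1 = cos s2 -> sin s1 = sin s2 -> s1 = s2.
Proof.
  assert (Hord : forall u v, 0 <= u <= v -> v < 2 * PI -> cos u = cos v -> sin u = sin v -> u = v).
  { intros u v Huv Hv Ec Es.
    assert (Sd : sin (v - u) = 0) by (rewrite sin_minus, Ec, Es; ring).
    assert (Cd : cos (v - u) = 1).
    { rewrite cos_minus, Ec, Es. pose proof (sin2_cos2 v) as E. unfold Rsqr in E. lra. }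
    destruct (Rtotal_order (v - u) PI) as [Hlt | [Heq | Hgt]].
    - destruct (Req_dec (v - u) 0); [lra|].
      pose proof (sin_gt_0 (v - u) ltac:(lra) Hlt). lra.
    - rewrite Heq, cos_PI in Cd. lra.
    - pose proof (sin_lt_0 (v - u) Hgt ltac:(lra)). lra. }
  intros H1 H2 Ec Es.
  destruct (Rle_lt_dec s1 s2); [apply Hord | symmetry; apply Hord]; auto; lra.
Qed.

Lemma IVT_strict (g : R -> R) (a b : R) : a < b ->
  (forall s, a <= s <= b -> continuity_pt g s) -> g a < 0 < g b ->
  exists z, a < z < b /\ g z = 0.
Proof.
  intros Hab Cg Hg.
  destruct (Ranalysis5.IVT_interv g a b) as [z [Hz Ez]]; try lra; auto.
  exists z. split; [|auto].
  split; apply Rnot_le_lt; intros Hle;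
    [replace z with a in Ez by lra | replace z with b in Ez by lra]; lra.
Qed.

Lemma continuous_loop_not_injective (f : R -> R) (P : R) : 0 < P ->
  (forall s, 0 <= s <= P -> continuity_pt f s) -> f 0 = f P ->
  exists s1 s2, 0 <= s1 < s2 /\ s2 < P /\ f s1 = f s2.
Proof.
  intros HP Hc Hper.
  destruct (Req_dec (f (P / 2)) (f 0)) as [E|NE].
  { exists 0, (P / 2). repeat split; auto; lra. }
  (* f crosses the mean of f 0 and f (P/2) on each half of [0, P] *)
  set (v := (f 0 + f (P / 2)) / 2).
  assert (Cl : forall s, 0 <= s <= P -> continuity_pt (fun t => f t - v) s) by (intros; reg; auto).
  assert (Cr : forall s, 0 <= s <= P -> continuity_pt (fun t => v - f t) s) by (intros; reg; auto).
  destruct (Rlt_or_le (f 0) (f (P / 2))) as [Hlt|Hle].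
  - destruct (IVT_strict _ 0 (P / 2) ltac:(lra) (fun s Hs => Cl s ltac:(lra))) as [z1 [Hz1 E1]];
      [unfold v; lra|].
    destruct (IVT_strict _ (P / 2) P ltac:(lra) (fun s Hs => Cr s ltac:(lra))) as [z2 [Hz2 E2]];
      [unfold v; lra|].
    exists z1, z2. repeat split; lra.
  - destruct (IVT_strict _ 0 (P / 2) ltac:(lra) (fun s Hs => Cr s ltac:(lra))) as [z1 [Hz1 E1]];
      [unfold v; lra|].
    destruct (IVT_strict _ (P / 2) P ltac:(lra) (fun s Hs => Cl s ltac:(lra))) as [z2 [Hz2 E2]];
      [unfold v; lra|].
    exists z1, z2. repeat split; lra.
Qed.

Definition trig2 (A B C th : R) : R := A + B * cos (2 * th) + C * sin (2 * th).

Ltac rewrite_Derive H :=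
  match goal with |- context [Derive ?f ?t] => rewrite (is_derive_unique f t _ (H t)) end.

Lemma derive_zero_const (F : R -> R) : (forall t, is_derive F t 0) -> forall t, F t = F 0.
Proof.
  intros H t.
  destruct (MVT_gen F 0 t (fun _ => 0)) as [c [_ Hc]]; [intros; apply H | | lra].
  intros s _. apply continuity_pt_filterlim. apply (ex_derive_continuous F). eexists; apply H.
Qed.

Lemma oscillator_zero_init (w w1 : R -> R) (k : R) : 0 < k ->
  (forall t, is_derive w t (w1 t)) -> (forall t, is_derive w1 t (- k * w t)) ->
  w 0 = 0 -> w1 0 = 0 -> forall t, w t = 0.
Proof.
  intros Hk Hw Hw1 W0 W10 t.
  assert (Energy : forall t, w1 t * w1 t + k * (w t * w t) = w1 0 * w1 0 + k * (w 0 * w 0)).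
  { apply (derive_zero_const (fun t => w1 t * w1 t + k * (w t * w t))).
    intros s. auto_derive.
    - repeat split; eexists; first [apply Hw1 | apply Hw].
    - rewrite_Derive Hw1. rewrite_Derive Hw. ring. }
  specialize (Energy t). rewrite W0, W10 in Energy.
  apply Rsqr_0_uniq. unfold Rsqr. nra.
Qed.

Lemma ode_solution_trig2 (g : R -> R) :
  (forall th, ex_derive g th /\ ex_derive_n g 2 th /\ ex_derive_n g 3 th /\
              Derive_n g 3 th + 4 * Derive g th = 0) ->
  exists A B C, forall th, g th = trig2 A B C th.
Proof.
  intros H.
  set (u := Derive g). set (u1 := Derive u). set (u2 := Derive u1).
  assert (Hg : forall t, is_derive g t (u t)) by (intros t; apply Derive_correct, H).
  assert (Hu : forall t, is_derive u t (u1 t)) by (intros t; apply Derive_correct, H).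
  assert (Hu1 : forall t, is_derive u1 t (u2 t)) by (intros t; apply Derive_correct, H).
  assert (Heq : forall t, u2 t = - 4 * u t).
  { intros t. destruct (H t) as [_ [_ [_ E]]]. change (u2 t + 4 * u t = 0) in E. lra. }
  (* g' solves w'' = -4 w, so it is the harmonic with the same initial data *)
  set (c1 := u 0). set (c2 := u1 0 / 2).
  assert (Hu_harm : forall t, u t = c1 * cos (2 * t) + c2 * sin (2 * t)).
  { intros t.
    enough (u t - c1 * cos (2 * t) - c2 * sin (2 * t) = 0) by lra.
    apply (oscillator_zero_init (fun t => u t - c1 * cos (2 * t) - c2 * sin (2 * t))
             (fun t => u1 t + 2 * c1 * sin (2 * t) - 2 * c2 * cos (2 * t)) 4); try lra.
    - intros s. auto_derive; [eexists; apply Hu | rewrite_Derive Hu; ring].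
    - intros s. auto_derive; [eexists; apply Hu1 | rewrite_Derive Hu1; rewrite Heq; ring].
    - unfold c1. rewrite Rmult_0_r, cos_0, sin_0. ring.
    - unfold c2. rewrite Rmult_0_r, cos_0, sin_0. field. }
  set (G := fun t => g t - c1 / 2 * sin (2 * t) + c2 / 2 * cos (2 * t)).
  assert (HG : forall t, G t = G 0).
  { apply derive_zero_const. intros t. unfold G.
    auto_derive; [eexists; apply Hg | rewrite_Derive Hg; rewrite Hu_harm; field]. }
  exists (G 0), (- (c2 / 2)), (c1 / 2). intros th.
  specialize (HG th). unfold G in HG at 1. unfold trig2. lra.
Qed.

Lemma sq_support_ode_trig2 (h : R -> R) (A B C : R) :
  (forall th, h th ^ 2 = trig2 A B C th) -> sq_support_ode h.
Proof.
  intros Hh.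
  set (T1 := fun th => 2 * (- B * sin (2 * th) + C * cos (2 * th))).
  set (T2 := fun th => - 4 * (B * cos (2 * th) + C * sin (2 * th))).
  set (T3 := fun th => 8 * (B * sin (2 * th) - C * cos (2 * th))).
  assert (D1 : forall t, is_derive (trig2 A B C) t (T1 t))
    by (intros t; unfold trig2, T1; auto_derive; [auto | ring]).
  assert (D2 : forall t, is_derive T1 t (T2 t)) by (intros t; unfold T1, T2; auto_derive; [auto | ring]).
  assert (D3 : forall t, is_derive T2 t (T3 t)) by (intros t; unfold T2, T3; auto_derive; [auto | ring]).
  assert (G0 : (fun th => h th ^ 2) = trig2 A B C) by (apply functional_extensionality; exact Hh).
  assert (G1 : Derive_n (trig2 A B C) 1 = T1)
    by (apply functional_extensionality; intros t; apply is_derive_unique, D1).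
  assert (G2 : Derive_n (trig2 A B C) 2 = T2)
    by (apply functional_extensionality; intros t; simpl in G1 |- *; rewrite G1; apply is_derive_unique, D2).
  assert (G3 : Derive_n (trig2 A B C) 3 = T3)
    by (apply functional_extensionality; intros t; change (Derive (Derive_n (trig2 A B C) 2) t = T3 t);
        rewrite G2; apply is_derive_unique, D3).
  intros th. cbv zeta. rewrite G0. repeat split.
  - eexists; apply D1.
  - unfold ex_derive_n. rewrite G1. eexists; apply D2.
  - unfold ex_derive_n. rewrite G2. eexists; apply D3.
  - rewrite G3. change (Derive (trig2 A B C) th) with (Derive_n (trig2 A B C) 1 th).
    rewrite G1. unfold T1, T3. ring.
Qed.

Definition rotated_quad (p q phi th : R) : R := p * cos (th - phi) ^ 2 + q * sin (th - phi) ^ 2.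

Lemma rotated_quad_trig2 (p q phi th : R) :
  rotated_quad p q phi th
  = trig2 ((p + q) / 2) ((p - q) / 2 * cos (2 * phi)) ((p - q) / 2 * sin (2 * phi)) th.
Proof.
  unfold rotated_quad, trig2.
  replace (2 * th) with (2 * (th - phi) + 2 * phi) by ring.
  set (u := th - phi). rewrite cos_plus, sin_plus, (cos_2a u), (sin_2a u).
  pose proof (sin2_cos2 (2 * phi)) as E2. pose proof (sin2_cos2 u) as E1. unfold Rsqr in E1, E2.
  transitivity ((p + q) / 2 * (sin u * sin u + cos u * cos u)
                + (p - q) / 2 * (cos u * cos u - sin u * sin u)); [field|].
  transitivity ((p + q) / 2 + (p - q) / 2 * (cos u * cos u - sin u * sin u)
                * (sin (2 * phi) * sin (2 * phi) + cos (2 * phi) * cos (2 * phi))); [rewrite E1, E2; ring|].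
  ring.
Qed.

Lemma trig2_rotated_quad (A B C : R) :
  exists r phi, 0 <= r /\ forall th, trig2 A B C th = rotated_quad (A + r) (A - r) phi th.
Proof.
  destruct (polar_form B C) as [psi [HB HC]].
  set (r := sqrt (B * B + C * C)) in *.
  exists r, (psi / 2). split; [apply sqrt_pos|].
  intros th. rewrite rotated_quad_trig2.
  replace (2 * (psi / 2)) with psi by field.
  unfold trig2. rewrite HB, HC. field.
Qed.

Lemma rotated_quad_ge (p q phi th : R) : q <= p -> q <= rotated_quad p q phi th.
Proof.
  intros Hqp. unfold rotated_quad. set (u := th - phi).
  pose proof (sin2_cos2 u) as E. unfold Rsqr in E.
  replace (p * cos u ^ 2 + q * sin u ^ 2)
    with (q * (sin u * sin u + cos u * cos u) + (p - q) * cos u ^ 2) by ring.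
  rewrite E. pose proof (pow2_ge_0 (cos u)). nra.
Qed.

Lemma rotated_quad_perp (p q phi : R) :
  rotated_quad p q phi (phi + PI / 2) = q /\ rotated_quad p q phi (phi + PI / 2 + PI) = q.
Proof.
  unfold rotated_quad.
  replace (phi + PI / 2 - phi) with (PI / 2) by ring.
  replace (phi + PI / 2 + PI - phi) with (PI / 2 + PI) by ring.
  rewrite neg_cos, neg_sin, cos_PI2, sin_PI2. split; ring.
Qed.

Definition height (th : R) (p : R * R) : R := fst p * cos th + snd p * sin th.

Lemma height_add_PI (th : R) (p : R * R) : height (th + PI) p = - height th p.
Proof. unfold height. rewrite neg_cos, neg_sin. ring. Qed.

Lemma height_inj (a : R) (p q : R * R) :
  height a p = height a q -> height (a + PI / 2) p = height (a + PI / 2) q -> p = q.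
Proof.
  destruct p as [p1 p2], q as [q1 q2]. unfold height; simpl.
  rewrite cos_plus, sin_plus, cos_PI2, sin_PI2. intros E1 E2.
  pose proof (sin2_cos2 a) as E. unfold Rsqr in E.
  f_equal.
  - transitivity (p1 * (sin a * sin a + cos a * cos a)); [rewrite E; ring|].
    transitivity (cos a * (p1 * cos a + p2 * sin a)
                  - sin a * (p1 * (cos a * 0 - sin a * 1) + p2 * (sin a * 0 + cos a * 1))); [ring|].
    rewrite E1, E2. transitivity (q1 * (sin a * sin a + cos a * cos a)); [ring | rewrite E; ring].
  - transitivity (p2 * (sin a * sin a + cos a * cos a)); [rewrite E; ring|].
    transitivity (sin a * (p1 * cos a + p2 * sin a)
                  + cos a * (p1 * (cos a * 0 - sin a * 1) + p2 * (sin a * 0 + cos a * 1))); [ring|].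
    rewrite E1, E2. transitivity (q2 * (sin a * sin a + cos a * cos a)); [ring | rewrite E; ring].
Qed.

Lemma support_fun_attained (O : R * R -> Prop) (th : R) (p : R * R) :
  O p -> (forall q, O q -> height th q <= height th p) -> support_fun O th = height th p.
Proof.
  intros Hp Hmax. unfold support_fun.
  rewrite (is_lub_Rbar_unique _ (Finite (height th p))); [reflexivity|].
  split.
  - intros r [q [Oq ->]]. apply Hmax, Oq.
  - intros b Hb. apply Hb. exists p. auto.
Qed.

Definition ellipse_pt (a b phi s : R) : R * R :=
  (a * cos s * cos phi - b * sin s * sin phi, a * cos s * sin phi + b * sin s * cos phi).

Lemma continuity_ellipse_pt (a b phi : R) :
  continuity (fun s => fst (ellipse_pt a b phi s)) /\ continuity (fun s => snd (ellipse_pt a b phi s)).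
Proof. unfold ellipse_pt; simpl. split; reg. Qed.

(* Normalised coordinates along the axes of the ellipse: the ellipse is [ell_u^2 + ell_v^2 = 1]. *)
Definition ell_u (a phi : R) (p : R * R) : R := (fst p * cos phi + snd p * sin phi) / a.
Definition ell_v (b phi : R) (p : R * R) : R := (snd p * cos phi - fst p * sin phi) / b.

Definition ell_gauge (a b phi : R) (p : R * R) : R := ell_u a phi p ^ 2 + ell_v b phi p ^ 2.

Definition ellipse_support (a b phi th : R) : R := sqrt (rotated_quad (a ^ 2) (b ^ 2) phi th).

Section EllipseCoordinates.

Variables a b phi : R.
Hypothesis Ha : 0 < a.
Hypothesis Hb : 0 < b.

Lemma ellipse_pt_coords (s : R) :
  ell_u a phi (ellipse_pt a b phi s) = cos s /\ ell_v b phi (ellipse_pt a b phi s) = sin s.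
Proof.
  unfold ell_u, ell_v, ellipse_pt; simpl.
  pose proof (sin2_cos2 phi) as E. unfold Rsqr in E.
  split.
  - transitivity (a * cos s * (sin phi * sin phi + cos phi * cos phi) / a); [field; lra|].
    rewrite E. field. lra.
  - transitivity (b * sin s * (sin phi * sin phi + cos phi * cos phi) / b); [field; lra|].
    rewrite E. field. lra.
Qed.

Lemma ellipse_pt_of_coords (p : R * R) (s : R) :
  ell_u a phi p = cos s -> ell_v b phi p = sin s -> p = ellipse_pt a b phi s.
Proof.
  intros Hu Hv. unfold ellipse_pt. rewrite <- Hu, <- Hv.
  destruct p as [p1 p2]. unfold ell_u, ell_v; simpl.
  pose proof (sin2_cos2 phi) as E. unfold Rsqr in E.
  f_equal.
  - transitivity (p1 * (sin phi * sin phi + cos phi * cos phi)); [rewrite E; ring | field; lra].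
  - transitivity (p2 * (sin phi * sin phi + cos phi * cos phi)); [rewrite E; ring | field; lra].
Qed.

Lemma height_ell_coords (th : R) (p : R * R) :
  height th p = a * ell_u a phi p * cos (th - phi) + b * ell_v b phi p * sin (th - phi).
Proof.
  unfold height, ell_u, ell_v. rewrite cos_minus, sin_minus.
  pose proof (sin2_cos2 phi) as E. unfold Rsqr in E.
  transitivity ((fst p * cos th + snd p * sin th) * (sin phi * sin phi + cos phi * cos phi));
    [rewrite E; ring | field; lra].
Qed.

Lemma height_ellipse_pt (th s : R) :
  height th (ellipse_pt a b phi s) = a * cos s * cos (th - phi) + b * sin s * sin (th - phi).
Proof. rewrite height_ell_coords. destruct (ellipse_pt_coords s) as [-> ->]. ring. Qed.

Lemma ellipse_pt_inj (s1 s2 : R) : 0 <= s1 < 2 * PI -> 0 <= s2 < 2 * PI ->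
  ellipse_pt a b phi s1 = ellipse_pt a b phi s2 -> s1 = s2.
Proof.
  intros H1 H2 E.
  destruct (ellipse_pt_coords s1) as [U1 V1]. destruct (ellipse_pt_coords s2) as [U2 V2].
  rewrite E in U1, V1. apply cos_sin_inj; congruence.
Qed.

End EllipseCoordinates.

Lemma ellipse_support_sq (a b phi th : R) :
  ellipse_support a b phi th * ellipse_support a b phi th = rotated_quad (a ^ 2) (b ^ 2) phi th.
Proof. apply sqrt_sqrt. unfold rotated_quad. nra. Qed.

Lemma height_ellipse_le (a b phi th s : R) : 0 < a -> 0 < b ->
  height th (ellipse_pt a b phi s) <= ellipse_support a b phi th.
Proof.
  intros Ha Hb. rewrite height_ellipse_pt by auto.
  set (z := a * cos s * cos (th - phi) + b * sin s * sin (th - phi)).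
  apply (Rle_trans _ (Rabs z)); [apply Rle_abs|].
  rewrite <- sqrt_Rsqr_abs. apply sqrt_le_1_alt.
  (* Cauchy-Schwarz for (a cos, b sin)(th - phi) against (cos s, sin s) *)
  pose proof (sin2_cos2 s) as E. unfold Rsqr in E |- *. unfold z, rotated_quad.
  pose proof (pow2_ge_0 (a * cos (th - phi) * sin s - b * sin (th - phi) * cos s)).
  transitivity ((a ^ 2 * cos (th - phi) ^ 2 + b ^ 2 * sin (th - phi) ^ 2)
                * (sin s * sin s + cos s * cos s)); [nra | rewrite E; lra].
Qed.

Lemma height_ellipse_attained (a b phi th : R) : 0 < a -> 0 < b ->
  exists s, height th (ellipse_pt a b phi s) = ellipse_support a b phi th.
Proof.
  intros Ha Hb.
  destruct (polar_form (a * cos (th - phi)) (b * sin (th - phi))) as [s [H1 H2]].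
  exists s. rewrite height_ellipse_pt by auto.
  replace (ellipse_support a b phi th) with (sqrt (a * cos (th - phi) * (a * cos (th - phi))
                                 + b * sin (th - phi) * (b * sin (th - phi))))
    by (unfold ellipse_support, rotated_quad; f_equal; ring).
  set (r := sqrt _) in *.
  pose proof (sin2_cos2 s) as E. unfold Rsqr in E.
  transitivity (a * cos (th - phi) * cos s + b * sin (th - phi) * sin s); [ring|].
  rewrite H1 at 1. rewrite H2 at 1.
  transitivity (r * (sin s * sin s + cos s * cos s)); [ring | rewrite E; ring].
Qed.

Lemma support_fun_ellipse (O : R * R -> Prop) (a b phi : R) : 0 < a -> 0 < b ->
  (forall p, O p <-> exists s, p = ellipse_pt a b phi s) ->
  forall th, support_fun O th = ellipse_support a b phi th.
Proof.
  intros Ha Hb HO th. destruct (height_ellipse_attained a b phi th Ha Hb) as [s Hs].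
  rewrite <- Hs. apply support_fun_attained.
  - apply HO. exists s. reflexivity.
  - intros q Hq. apply HO in Hq. destruct Hq as [s' ->]. rewrite Hs. apply height_ellipse_le; auto.
Qed.

Lemma sq_support_ode_ellipse (O : R * R -> Prop) :
  is_centered_ellipse O -> sq_support_ode (support_fun O).
Proof.
  intros [a [b [phi [Ha [Hb HO]]]]].
  apply (sq_support_ode_trig2 _ ((a ^ 2 + b ^ 2) / 2) ((a ^ 2 - b ^ 2) / 2 * cos (2 * phi))
                                 ((a ^ 2 - b ^ 2) / 2 * sin (2 * phi))).
  intros th. rewrite (support_fun_ellipse O a b phi Ha Hb HO th), <- rotated_quad_trig2.
  rewrite <- ellipse_support_sq. ring.
Qed.

Lemma continuity_sq_dist (x y : R -> R) (c d : R) : continuity x -> continuity y ->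
  continuity (fun t => (x t - c) ^ 2 + (y t - d) ^ 2).
Proof. intros Cx Cy. reg. Qed.

Lemma continuity_height (x y : R -> R) (th : R) : continuity x -> continuity y ->
  continuity (fun t => height th (x t, y t)).
Proof. intros Cx Cy. unfold height; simpl. reg. Qed.

Lemma continuous_pos_lower_bound (F : R -> R) (lo hi : R) :
  (forall t, lo <= t <= hi -> continuity_pt F t) -> (forall t, lo <= t <= hi -> 0 < F t) ->
  exists m, 0 < m /\ forall t, lo <= t <= hi -> m <= F t.
Proof.
  intros Hc Hp. destruct (Rle_or_lt lo hi) as [Hle|Hlt].
  - destruct (continuity_ab_min F lo hi Hle Hc) as [t0 [Hmin Ht0]].
    exists (F t0). auto.
  - exists 1. split; [lra|]. intros t Ht. lra.
Qed.

(* By compactness, away from [T s0] the points of the curve over [lo, hi] stay at a positive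
   distance from [(ex s0, ey s0)]. *)
Lemma continuity_selection (x y ex ey T : R -> R) (lo hi : R) :
  continuity x -> continuity y -> continuity ex -> continuity ey ->
  (forall s, lo <= T s <= hi /\ x (T s) = ex s /\ y (T s) = ey s) ->
  (forall s t, lo <= t <= hi -> x t = ex s -> y t = ey s -> t = T s) ->
  continuity T.
Proof.
  intros Cx Cy Cex Cey HT Huniq s0.
  set (dist_curve := fun t => (x t - ex s0) ^ 2 + (y t - ey s0) ^ 2).
  set (dist_family := fun s => (ex s - ex s0) ^ 2 + (ey s - ey s0) ^ 2).
  pose proof (continuity_sq_dist x y (ex s0) (ey s0) Cx Cy) as Cdc.
  pose proof (continuity_sq_dist ex ey (ex s0) (ey s0) Cex Cey s0) as Cdf.
  fold dist_curve in Cdc. fold dist_family in Cdf.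
  intros eps Heps.
  assert (Hpos : forall t, lo <= t <= hi -> Rabs (t - T s0) >= eps -> 0 < dist_curve t).
  { intros t Ht Hfar. unfold dist_curve.
    destruct (Req_dec (x t) (ex s0)) as [Ex|Ex]; [destruct (Req_dec (y t) (ey s0)) as [Ey|Ey]|].
    - rewrite (Huniq s0 t Ht Ex Ey), Rminus_eq_0, Rabs_R0 in Hfar. lra.
    - pose proof (pow2_ge_0 (x t - ex s0)). assert (0 < (y t - ey s0) ^ 2) by (apply pow2_gt_0; lra). lra.
    - pose proof (pow2_ge_0 (y t - ey s0)). assert (0 < (x t - ex s0) ^ 2) by (apply pow2_gt_0; lra). lra. }
  destruct (continuous_pos_lower_bound dist_curve lo (T s0 - eps)) as [m1 [Hm1 M1]].
  { intros; apply Cdc. }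
  { intros t Ht. apply Hpos; [pose proof (HT s0); lra | rewrite Rabs_left1; lra]. }
  destruct (continuous_pos_lower_bound dist_curve (T s0 + eps) hi) as [m2 [Hm2 M2]].
  { intros; apply Cdc. }
  { intros t Ht. apply Hpos; [pose proof (HT s0); lra | rewrite Rabs_right; lra]. }
  destruct (Cdf (Rmin m1 m2)) as [delta [Hdelta Hnear]]; [apply Rmin_pos; lra|].
  exists delta. split; auto.
  intros s Hs. specialize (Hnear s Hs). simpl in Hnear |- *. unfold R_dist in Hnear |- *.
  destruct (HT s) as [HTs [Ex Ey]].
  assert (Hdc : dist_curve (T s) < Rmin m1 m2).
  { replace (dist_curve (T s)) with (dist_family s) by (unfold dist_curve, dist_family; rewrite Ex, Ey; ring).
    replace (dist_family s0) with 0 in Hnear by (unfold dist_family; ring).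
    rewrite Rminus_0_r in Hnear. pose proof (Rle_abs (dist_family s)). lra. }
  pose proof (Rmin_l m1 m2). pose proof (Rmin_r m1 m2).
  apply Rabs_def1; apply Rnot_le_lt; intros Hle.
  - assert (m2 <= dist_curve (T s)) by (apply M2; lra). lra.
  - assert (m1 <= dist_curve (T s)) by (apply M1; lra). lra.
Qed.

Lemma continuity_pt_dominated (f g : R -> R) (t0 : R) :
  continuity_pt g t0 -> g t0 = 0 -> (forall t, Rabs (f t - f t0) <= g t) -> continuity_pt f t0.
Proof.
  intros Cg Hg0 Hdom eps Heps.
  destruct (Cg eps Heps) as [delta [Hdelta Hnear]].
  exists delta. split; auto. intros t Ht.
  specialize (Hnear t Ht). simpl in Hnear |- *. unfold R_dist in Hnear |- *.
  rewrite Hg0, Rminus_0_r in Hnear. pose proof (Rle_abs (g t)). pose proof (Hdom t). lra.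
Qed.

Section ClosedCurve.

Variables (x y : R -> R) (L : R).
Hypothesis HL : 0 < L.
Hypothesis Cx : continuity x.
Hypothesis Cy : continuity y.
Hypothesis Hper : forall t, x (t + L) = x t /\ y (t + L) = y t.
Hypothesis Hinj : forall s t, 0 <= s < L -> 0 <= t < L -> x s = x t -> y s = y t -> s = t.

Local Notation h := (support_fun (curve_image x y)).

Lemma curve_periodic_Z (k : Z) (t : R) : x (t + IZR k * L) = x t /\ y (t + IZR k * L) = y t.
Proof.
  revert t. induction k using Z.peano_ind; intros t.
  - rewrite Rmult_0_l, Rplus_0_r. auto.
  - rewrite succ_IZR. replace (t + (IZR k + 1) * L) with ((t + L) + IZR k * L) by ring.
    destruct (IHk (t + L)) as [-> ->]. apply Hper.
  - rewrite <- Z.sub_1_r, minus_IZR. replace (t + (IZR k - 1) * L) with ((t - L) + IZR k * L) by ring.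
    destruct (IHk (t - L)) as [-> ->].
    destruct (Hper (t - L)) as [E1 E2]. replace (t - L + L) with t in E1, E2 by ring. auto.
Qed.

Lemma curve_reduce (t0 t : R) : exists k : Z,
  t0 <= t - IZR k * L < t0 + L /\ x (t - IZR k * L) = x t /\ y (t - IZR k * L) = y t.
Proof.
  destruct (archimed ((t - t0) / L)) as [H1 H2].
  exists (up ((t - t0) / L) - 1)%Z. rewrite minus_IZR.
  set (n := IZR (up ((t - t0) / L))) in *.
  split.
  - assert (Ht : t - t0 = (t - t0) / L * L) by (field; lra).
    split; [assert ((n - 1) * L <= (t - t0) / L * L) by (apply Rmult_le_compat_r; lra)
           | assert ((t - t0) / L * L < n * L) by (apply Rmult_lt_compat_r; lra)]; nra.
  - replace (t - (n - 1) * L) with (t + IZR (- (up ((t - t0) / L) - 1)) * L)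
      by (rewrite opp_IZR, minus_IZR; unfold n; ring).
    apply curve_periodic_Z.
Qed.

Lemma curve_inj_window (t0 s t : R) : t0 <= s < t0 + L -> t0 <= t < t0 + L ->
  x s = x t -> y s = y t -> s = t.
Proof.
  intros Hs Ht Ex Ey.
  destruct (curve_reduce 0 s) as [ks [Hs' [Xs Ys]]].
  destruct (curve_reduce 0 t) as [kt [Ht' [Xt Yt]]].
  assert (E : s - IZR ks * L = t - IZR kt * L) by (apply Hinj; [lra | lra | congruence | congruence]).
  assert (Hk : -1 < IZR (ks - kt) < 1)
    by (rewrite minus_IZR; split; apply (Rmult_lt_reg_r L); lra).
  destruct Hk as [Hk1 Hk2]. apply lt_IZR in Hk1, Hk2.
  assert (ks = kt) by lia. subst kt. lra.
Qed.

Lemma support_fun_curve_attained (th : R) : exists t,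
  h th = height th (x t, y t) /\ forall t', height th (x t', y t') <= height th (x t, y t).
Proof.
  destruct (continuity_ab_maj (fun t => height th (x t, y t)) 0 L) as [M [HM _]];
    [lra | intros; apply continuity_height; auto|].
  assert (Hmax : forall t', height th (x t', y t') <= height th (x M, y M)).
  { intros t'. destruct (curve_reduce 0 t') as [k [Hk [<- <-]]]. apply HM. lra. }
  exists M. split; auto.
  apply support_fun_attained; [exists M; reflexivity|].
  intros q [t ->]. apply Hmax.
Qed.

Lemma height_le_support (th t : R) : height th (x t, y t) <= h th.
Proof. destruct (support_fun_curve_attained th) as [t0 [-> Hmax]]. apply Hmax. Qed.

Lemma curve_bounded : exists B, 0 <= B /\ forall t, Rabs (x t) <= B /\ Rabs (y t) <= B.
Proof.
  destruct (continuity_ab_maj (fun t => (x t - 0) ^ 2 + (y t - 0) ^ 2) 0 L) as [M [HM _]];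
    [lra | intros; apply continuity_sq_dist; auto|].
  exists (1 + ((x M - 0) ^ 2 + (y M - 0) ^ 2)). split; [nra|].
  intros t. destruct (curve_reduce 0 t) as [k [Hk [E1 E2]]].
  specialize (HM (t - IZR k * L) ltac:(lra)). simpl in HM. rewrite E1, E2 in HM.
  split; apply Rabs_le; split; nra.
Qed.

Lemma support_fun_curve_continuous : continuity h.
Proof.
  intros th0. destruct curve_bounded as [B [HB Hbd]].
  apply (continuity_pt_dominated _ (fun th => B * (Rabs (cos th - cos th0) + Rabs (sin th - sin th0)))).
  - reg.
  - rewrite !Rminus_eq_0, Rabs_R0. ring.
  - intros th.
    destruct (support_fun_curve_attained th0) as [t0 [-> M0]].
    destruct (support_fun_curve_attained th) as [t1 [-> M1]].
    assert (Hgap : forall t, Rabs (height th (x t, y t) - height th0 (x t, y t))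
                             <= B * (Rabs (cos th - cos th0) + Rabs (sin th - sin th0))).
    { intros t. destruct (Hbd t) as [Bx By]. unfold height; simpl.
      replace (x t * cos th + y t * sin th - (x t * cos th0 + y t * sin th0))
        with (x t * (cos th - cos th0) + y t * (sin th - sin th0)) by ring.
      eapply Rle_trans; [apply Rabs_triang|]. rewrite !Rabs_mult.
      pose proof (Rabs_pos (cos th - cos th0)). pose proof (Rabs_pos (sin th - sin th0)). nra. }
    pose proof (M1 t0). pose proof (M0 t1).
    pose proof (Hgap t0) as G0. pose proof (Hgap t1) as G1.
    apply Rabs_le_between in G0, G1. apply Rabs_le_between. lra.
Qed.

Lemma curve_not_in_line (a : R) : (forall t, height (a + PI / 2) (x t, y t) = 0) -> False.
Proof.
  intros Hline.
  destruct (continuous_loop_not_injective (fun t => height a (x t, y t)) L) as [s1 [s2 [Hs12 [Hs2 E]]]];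
    [auto | intros; apply continuity_height; auto | |].
  - destruct (Hper 0) as [E1 E2]. rewrite Rplus_0_l in E1, E2. rewrite E1, E2. reflexivity.
  - assert (Hpt : (x s1, y s1) = (x s2, y s2)) by (apply (height_inj a); [exact E | rewrite !Hline; reflexivity]).
    injection Hpt as Ex Ey.
    assert (s1 = s2) by (apply Hinj; auto; lra). lra.
Qed.

Lemma support_fun_curve_pos : (forall th, h th <> 0) -> forall th, 0 < h th.
Proof.
  intros Hnz th. apply Rnot_le_lt. intros Hle.
  assert (Hneg : h th < 0) by (pose proof (Hnz th); lra).
  (* h (th + PI) >= - h th > 0, so h would vanish in between *)
  assert (Hopp : 0 < h (th + PI)).
  { destruct (support_fun_curve_attained th) as [t [E _]].
    pose proof (height_le_support (th + PI) t) as Hle'. rewrite height_add_PI in Hle'. lra. }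
  destruct (IVT_strict h th (th + PI)) as [z [_ Ez]];
    [pose proof PI_RGT_0; lra | intros; apply support_fun_curve_continuous | lra | ].
  exact (Hnz z Ez).
Qed.

(* A simple closed curve contains no simple loop other than itself: otherwise the parameter of
   the curve, read off along the loop, would be a continuous injective function on a circle. *)
Lemma contained_loop_exhausts_curve (ex ey : R -> R) (P : R) : 0 < P ->
  continuity ex -> continuity ey -> ex P = ex 0 -> ey P = ey 0 ->
  (forall s1 s2, 0 <= s1 < P -> 0 <= s2 < P -> ex s1 = ex s2 -> ey s1 = ey s2 -> s1 = s2) ->
  (forall s, exists t, x t = ex s /\ y t = ey s) ->
  forall t0, exists s, x t0 = ex s /\ y t0 = ey s.
Proof.
  intros HP Cex Cey EPx EPy Hloop Hcover t0.
  destruct (classic (exists s, x t0 = ex s /\ y t0 = ey s)) as [|Hoff]; [auto | exfalso].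
  assert (Hsel : forall s, exists T, t0 <= T < t0 + L /\ x T = ex s /\ y T = ey s).
  { intros s. destruct (Hcover s) as [t [Xt Yt]].
    destruct (curve_reduce t0 t) as [k [Hk [E1 E2]]].
    exists (t - IZR k * L). rewrite E1, E2. auto. }
  assert (Huniq : forall s T1 T2, t0 <= T1 < t0 + L -> t0 <= T2 <= t0 + L ->
            x T1 = ex s -> y T1 = ey s -> x T2 = ex s -> y T2 = ey s -> T2 = T1).
  { intros s T1 T2 H1 H2 X1 Y1 X2 Y2.
    assert (T2 <> t0 + L).
    { intros ->. destruct (Hper t0) as [P1 P2]. apply Hoff. exists s. split; congruence. }
    apply (curve_inj_window t0); [lra | lra | congruence | congruence]. }
  set (T := fun s => proj1_sig (constructive_indefinite_description _ (Hsel s))).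
  assert (HT : forall s, t0 <= T s < t0 + L /\ x (T s) = ex s /\ y (T s) = ey s)
    by (intros s; exact (proj2_sig (constructive_indefinite_description _ (Hsel s)))).
  assert (CT : continuity T).
  { apply (continuity_selection x y ex ey T t0 (t0 + L)); auto.
    - intros s. destruct (HT s) as [? ?]. split; [lra | auto].
    - intros s t Ht Xt Yt. destruct (HT s) as [HTs [X1 Y1]]. apply (Huniq s); auto. }
  destruct (continuous_loop_not_injective T P) as [s1 [s2 [Hs12 [Hs2 Es]]]];
    [auto | intros; apply CT | |].
  - destruct (HT P) as [HP' [XP YP]]. destruct (HT 0) as [H0 [X0 Y0]].
    apply (Huniq 0); [lra | lra | congruence | congruence | auto | auto].
  - destruct (HT s1) as [_ [X1 Y1]]. destruct (HT s2) as [_ [X2 Y2]].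
    assert (s1 = s2) by (apply Hloop; [lra | lra | congruence | congruence]). lra.
Qed.

Section EllipticSupport.

Variables a b phi : R.
Hypothesis Ha : 0 < a.
Hypothesis Hb : 0 < b.
Hypothesis Hh : forall th, h th = ellipse_support a b phi th.

Lemma curve_in_ellipse (t : R) : ell_gauge a b phi (x t, y t) <= 1.
Proof.
  set (p := (x t, y t)). set (U := ell_u a phi p). set (V := ell_v b phi p).
  (* test p in the normal direction of the ellipse at its point (U, V) / |(U, V)| *)
  destruct (polar_form (U / a) (V / b)) as [be [H1 H2]].
  set (r := sqrt _) in H1, H2.
  assert (Hr : 0 <= r) by apply sqrt_pos.
  set (al := be + phi).
  assert (Hle : height al p <= ellipse_support a b phi al) by (rewrite <- Hh; apply height_le_support).
  pose proof (ellipse_support_sq a b phi al) as HS. assert (0 <= ellipse_support a b phi al) by apply sqrt_pos.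
  rewrite (height_ell_coords a b phi Ha Hb) in Hle.
  unfold rotated_quad in HS. fold U V in Hle.
  replace (al - phi) with be in Hle, HS by (unfold al; ring).
  set (H0 := ellipse_support a b phi al) in *. set (E := a * U * cos be + b * V * sin be) in *.
  assert (HrE : r * E = U * U + V * V).
  { unfold E. transitivity (a * U * (r * cos be) + b * V * (r * sin be)); [ring|].
    rewrite <- H1, <- H2. field. lra. }
  assert (HrH : r * r * (H0 * H0) = U * U + V * V).
  { rewrite HS. transitivity (a ^ 2 * (r * cos be) ^ 2 + b ^ 2 * (r * sin be) ^ 2); [ring|].
    rewrite <- H1, <- H2. field. lra. }
  unfold ell_gauge. fold p U V. apply Rnot_lt_le. intros Hgt.
  assert (0 < r) by (destruct (Req_dec r 0) as [Z|]; [rewrite Z in HrE; nra | lra]).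
  assert (0 < E) by nra.
  assert (r * r * (E * E) <= r * r * (H0 * H0)) by (apply Rmult_le_compat_l; nra).
  nra.
Qed.

Lemma ellipse_in_curve (s : R) : exists t, (x t, y t) = ellipse_pt a b phi s.
Proof.
  (* the outer normal of the ellipse at [ellipse_pt s] has direction be + phi *)
  destruct (polar_form (b * cos s) (a * sin s)) as [be [H1 H2]].
  set (r := sqrt _) in H1, H2.
  pose proof (sin2_cos2 s) as Hsc. unfold Rsqr in Hsc.
  assert (Hr : 0 < r).
  { apply sqrt_lt_R0.
    assert (0 < a * a) by nra. assert (0 < b * b) by nra.
    destruct (Rle_lt_dec (a * a) (b * b)); nra. }
  set (al := be + phi).
  destruct (support_fun_curve_attained al) as [t [Et _]].
  exists t. pose proof (curve_in_ellipse t) as Hin.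
  set (p := (x t, y t)) in *. set (U := ell_u a phi p) in *. set (V := ell_v b phi p) in *.
  rewrite Hh, (height_ell_coords a b phi Ha Hb) in Et. fold U V in Et.
  pose proof (ellipse_support_sq a b phi al) as HS. assert (0 <= ellipse_support a b phi al) by apply sqrt_pos.
  unfold rotated_quad in HS.
  replace (al - phi) with be in Et, HS by (unfold al; ring).
  set (H0 := ellipse_support a b phi al) in *.
  assert (HrH : r * H0 = a * b * (U * cos s + V * sin s)).
  { rewrite Et. transitivity (a * U * (r * cos be) + b * V * (r * sin be)); [ring|].
    rewrite <- H1, <- H2. ring. }
  assert (HrH2 : (r * H0) * (r * H0) = (a * b) * (a * b)).
  { transitivity (r * r * (H0 * H0)); [ring|]. rewrite HS.
    transitivity (a ^ 2 * (r * cos be) ^ 2 + b ^ 2 * (r * sin be) ^ 2); [ring|].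
    rewrite <- H1, <- H2. transitivity (a * a * b * b * (sin s * sin s + cos s * cos s)); [ring|].
    rewrite Hsc. ring. }
  assert (Hab : 0 < a * b) by (apply Rmult_lt_0_compat; lra).
  assert (Hdot : U * cos s + V * sin s = 1).
  { assert (r * H0 = a * b)
      by (apply Rsqr_inj; [apply Rmult_le_pos; lra | lra | exact HrH2]).
    apply (Rmult_eq_reg_l (a * b)); lra. }
  unfold ell_gauge in Hin. fold p U V in Hin.
  (* |(U, V)| <= 1 and (U, V) . (cos s, sin s) = 1 force (U, V) = (cos s, sin s) *)
  assert (Hz : (U - cos s) ^ 2 + (V - sin s) ^ 2 <= 0) by nra.
  pose proof (pow2_ge_0 (U - cos s)). pose proof (pow2_ge_0 (V - sin s)).
  apply ellipse_pt_of_coords; auto; fold U V; nra.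
Qed.

Lemma curve_on_ellipse (t : R) : exists s, (x t, y t) = ellipse_pt a b phi s.
Proof.
  destruct (contained_loop_exhausts_curve (fun s => fst (ellipse_pt a b phi s))
              (fun s => snd (ellipse_pt a b phi s)) (2 * PI)) with (t0 := t) as [s [Xs Ys]].
  - pose proof PI_RGT_0. lra.
  - apply continuity_ellipse_pt.
  - apply continuity_ellipse_pt.
  - unfold ellipse_pt; simpl. rewrite cos_2PI, sin_2PI, cos_0, sin_0. reflexivity.
  - unfold ellipse_pt; simpl. rewrite cos_2PI, sin_2PI, cos_0, sin_0. reflexivity.
  - intros s1 s2 H1 H2 X Y. apply (ellipse_pt_inj a b phi Ha Hb); auto.
    rewrite (surjective_pairing (ellipse_pt a b phi s1)), X, Y. apply surjective_pairing.
  - intros s. destruct (ellipse_in_curve s) as [t' Et]. exists t'. rewrite <- Et. auto.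
  - exists s. rewrite Xs, Ys. apply surjective_pairing.
Qed.

End EllipticSupport.

Lemma curve_is_ellipse (a b phi : R) : 0 < a -> 0 < b ->
  (forall th, h th = ellipse_support a b phi th) -> is_centered_ellipse (curve_image x y).
Proof.
  intros Ha Hb Hh. exists a, b, phi. split; [auto | split; [auto|]].
  intros p. split.
  - intros [t ->]. apply (curve_on_ellipse a b phi Ha Hb Hh).
  - intros [s ->]. destruct (ellipse_in_curve a b phi Ha Hb Hh s) as [t Et].
    exists t. symmetry. exact Et.
Qed.

Lemma support_fun_sq_not_flat (p phi : R) : ~ (forall th, h th ^ 2 = rotated_quad p 0 phi th).
Proof.
  intros Hsq. apply (curve_not_in_line phi). intros t.
  (* h vanishes in two opposite directions, so the curve lies on a line *)
  destruct (rotated_quad_perp p 0 phi) as [Q1 Q2].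
  assert (Hzero : forall th, rotated_quad p 0 phi th = 0 -> h th = 0).
  { intros th Q. destruct (Req_dec (h th) 0) as [|Hne]; [auto | exfalso].
    apply (pow_nonzero _ 2 Hne). rewrite Hsq; auto. }
  pose proof (height_le_support (phi + PI / 2) t) as Hup.
  pose proof (height_le_support (phi + PI / 2 + PI) t) as Hdown.
  rewrite height_add_PI, Hzero in Hdown by auto. rewrite Hzero in Hup by auto. lra.
Qed.

Lemma curve_is_ellipse_of_support_sq (p q phi : R) : 0 < q <= p ->
  (forall th, h th ^ 2 = rotated_quad p q phi th) -> is_centered_ellipse (curve_image x y).
Proof.
  intros Hqp Hsq.
  assert (Hpos : forall th, 0 < h th).
  { apply support_fun_curve_pos. intros th Z.
    pose proof (rotated_quad_ge p q phi th ltac:(lra)). rewrite <- Hsq, Z in *. simpl in *. lra. }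
  apply (curve_is_ellipse (sqrt p) (sqrt q) phi); [apply sqrt_lt_R0; lra | apply sqrt_lt_R0; lra |].
  intros th. unfold ellipse_support. rewrite !pow2_sqrt, <- Hsq by lra.
  rewrite sqrt_pow2; [auto | apply Rlt_le, Hpos].
Qed.

Lemma ellipse_of_sq_support_ode : sq_support_ode h -> is_centered_ellipse (curve_image x y).
Proof.
  intros Hode.
  destruct (ode_solution_trig2 (fun th => h th ^ 2) Hode) as [A [B [C Htrig]]].
  destruct (trig2_rotated_quad A B C) as [r [phi [Hr Hquad]]].
  assert (Hsq : forall th, h th ^ 2 = rotated_quad (A + r) (A - r) phi th)
    by (intros th; rewrite Htrig; apply Hquad).
  assert (Hmin : 0 <= A - r).
  { destruct (rotated_quad_perp (A + r) (A - r) phi) as [<- _]. rewrite <- Hsq. apply pow2_ge_0. }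
  destruct (Req_dec (A - r) 0) as [Hflat|Hflat].
  - rewrite Hflat in Hsq. contradiction (support_fun_sq_not_flat (A + r) phi).
  - apply (curve_is_ellipse_of_support_sq (A + r) (A - r) phi); [lra | exact Hsq].
Qed.

End ClosedCurve.

Lemma C2_continuity (f : R -> R) : C2 f -> continuity f.
Proof. intros Hf t. apply continuity_pt_filterlim, (ex_derive_continuous f), Hf. Qed.

Theorem mainTheorem12 (x y : R -> R) (L : R) :
  is_oval_param x y L ->
  (is_centered_ellipse (curve_image x y) <->
   sq_support_ode (support_fun (curve_image x y))).
Proof.
  intros [HL [C2x [C2y [Hper [Hinj _]]]]]. split.
  - apply sq_support_ode_ellipse.
  - apply (ellipse_of_sq_support_ode x y L HL (C2_continuity x C2x) (C2_continuity y C2y) Hper Hinj).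
Qed.
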